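(* In every polyhedral model $\mathcal{P}=(|K|,V)$, the relation $\equiv_\eta$ on $|K|$ is a weak simplicial bisimulation.
   Context: Fix a set PL of proposition letters. A simplex $\sigma\subseteq\mathbb{R}^m$ is the convex hull of $d+1$ affinely independent points; its faces are the simplices spanned by nonempty subsets of its vertices; its relative interior (cell) is $\tilde\sigma=\{\sum_i\lambda_iv_i:\lambda_i\in(0,1],\sum_i\lambda_i=1\}$. A simplicial complex $K$ is a finite set of simplices in $\mathbb{R}^m$ closed under faces, any two of which intersect in a common face or in $\emptyset$. The polyhedron $|K|$ is the union of its simplices with the subspace topology; the cells partition $|K|$. A polyhedral model is $\mathcal{P}=(|K|,V)$ with $V:\mathrm{PL}\to\mathcal{P}(|K|)$, each $V(p)$ a union of cells. A topological path from $x$ is a continuous $\pi:[0,1]\to|K|$ with $\pi(0)=x$. SLCS$_\eta$ formulas: $\Phi::=p\mid\neg\Phi\mid\Phi_1\wedge\Phi_2\mid\eta(\Phi_1,\Phi_2)$; $x\models p$ iff $x\in V(p)$; negation, conjunction standard; $x\models\eta(\Phi_1,\Phi_2)$ iff some topological path $\pi$ from $x$ has $\pi(1)\models\Phi_2$ and $\pi(r)\models\Phi_1$ for all $r\in[0,1)$. $x_1\equiv_\eta x_2$ means $x_1,x_2$ satisfy the same SLCS$_\eta$ formulas. A weak simplicial bisimulation is a symmetric relation $B\subseteq|K|\times|K|$ such that whenever $B(x_1,x_2)$: (1) for all $p$, $x_1\in V(p)$ iff $x_2\in V(p)$; (2) for each topological path $\pi_1$ from $x_1$ there is a topological path $\pi_2$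 from $x_2$ with $B(\pi_1(1),\pi_2(1))$ and such that for all $r_2\in[0,1)$ there is $r_1\in[0,1)$ with $B(\pi_1(r_1),\pi_2(r_2))$. *)

From HB Require Import structures.
From mathcomp Require Import all_boot all_order all_algebra.
From mathcomp Require Import all_classical all_reals all_analysis.
Set Implicit Arguments.
Unset Strict Implicit.
Unset Printing Implicit Defensive.
Import Order.TTheory GRing.Theory Num.Theory.
Import numFieldNormedType.Exports.
Local Open Scope classical_set_scope.
Local Open Scope ring_scope.

Section Polyhedral.
Variables (R : realType) (m : nat).
Notation point := 'rV[R]_m.

(* A simplex is given by its (duplicate-free) list of vertices. *)
Definition aff_indep (s : seq point) : Prop :=
  forall lam : point -> R,
    \sum_(v <- s) lam v *: v = 0 -> \sum_(v <- s) lam v = 0 ->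
    forall v, v \in s -> lam v = 0.

Definition is_simplex (s : seq point) : Prop :=
  s != [::] /\ uniq s /\ aff_indep s.

Definition hull (s : seq point) : set point :=
  [set x | exists lam : point -> R,
     (forall v, v \in s -> 0 <= lam v) /\ \sum_(v <- s) lam v = 1 /\
     x = \sum_(v <- s) lam v *: v].

Definition cell (s : seq point) : set point :=
  [set x | exists lam : point -> R,
     (forall v, v \in s -> 0 < lam v <= 1) /\ \sum_(v <- s) lam v = 1 /\
     x = \sum_(v <- s) lam v *: v].

Definition is_face (t s : seq point) : Prop :=
  t != [::] /\ uniq t /\ {subset t <= s}.

Definition simplicial_complex (K : seq (seq point)) : Prop :=
  (forall s, s \in K -> is_simplex s) /\
  (forall s t, s \in K -> is_face t s -> exists2 t', t' \in K & t' =i t) /\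
  (forall s1 s2, s1 \in K -> s2 \in K ->
     hull s1 `&` hull s2 = set0 \/
     exists t, [/\ is_face t s1, is_face t s2 & hull s1 `&` hull s2 = hull t]).

Definition polyhedron (K : seq (seq point)) : set point :=
  [set x | exists2 s, s \in K & hull s x].

(* topological path in |K| from x: continuous on [0,1] (values outside
   [0,1] are irrelevant), with values in |K| *)
Definition topo_path (K : seq (seq point)) (pi : R -> point) (x : point) : Prop :=
  {within `[0, 1], continuous pi} /\
  (forall r, 0 <= r <= 1 -> polyhedron K (pi r)) /\ pi 0 = x.

Variable PL : Type.

Definition valuation_ok (K : seq (seq point)) (V : PL -> set point) : Prop :=
  forall p, exists S : seq (seq point),
    {subset S <= K} /\ V p = [set x | exists2 s, s \in S & cell s x].

Inductive formula : Type :=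
  | FAtom of PL
  | FNeg of formula
  | FAnd of formula & formula
  | FEta of formula & formula.

Fixpoint sat (K : seq (seq point)) (V : PL -> set point) (phi : formula)
  (x : point) : Prop :=
  match phi with
  | FAtom p => V p x
  | FNeg f => ~ sat K V f x
  | FAnd f g => sat K V f x /\ sat K V g x
  | FEta f g => exists pi, topo_path K pi x /\ sat K V g (pi 1) /\
                  forall r, 0 <= r < 1 -> sat K V f (pi r)
  end.

Definition eta_equiv (K : seq (seq point)) (V : PL -> set point)
  (x1 x2 : point) : Prop :=
  polyhedron K x1 /\ polyhedron K x2 /\
  forall phi, sat K V phi x1 <-> sat K V phi x2.

Definition weak_simplicial_bisimulation (K : seq (seq point))
  (V : PL -> set point) (B : point -> point -> Prop) : Prop :=
  (forall x1 x2, B x1 x2 -> polyhedron K x1 /\ polyhedron K x2) /\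
  (forall x1 x2, B x1 x2 -> B x2 x1) /\
  (forall x1 x2, B x1 x2 ->
     (forall p, V p x1 <-> V p x2) /\
     (forall pi1, topo_path K pi1 x1 ->
        exists pi2, topo_path K pi2 x2 /\ B (pi1 1) (pi2 1) /\
          forall r2, 0 <= r2 < 1 -> exists r1, 0 <= r1 < 1 /\ B (pi1 r1) (pi2 r2))).

End Polyhedral.

(* Points of one cell of K satisfy the same formulas: a path from one point can
   be prefixed with the straight segment from the other, which stays inside the
   convex cell, so cells are unions of eta-classes. Conjoining, for every cell t
   that can be separated from the cell s by some formula, such a separating
   formula gives a characteristic formula chi(s), satisfied exactly by the points
   eta-equivalent to those of s. If pi1 is a path from x1 ending in the cell s1
   and visiting the cells S before time 1, then x1 satisfies
   eta(\/_{s in S} chi(s), chi(s1)); a path witnessing this formula at x2 is the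
   path pi2 required of a weak simplicial bisimulation. *)
From mathcomp Require Import all_boot all_order all_algebra.
From mathcomp Require Import all_classical all_reals all_analysis.
From mathcomp Require Import lra.
Set Implicit Arguments.
Unset Strict Implicit.
Unset Printing Implicit Defensive.
Import Order.TTheory GRing.Theory Num.Theory.
Import numFieldNormedType.Exports.
Local Open Scope classical_set_scope.
Local Open Scope ring_scope.

Lemma within_comp_continuous (S T U : topologicalType) (f : T -> U) (h : S -> T)
    (A : set S) (B : set T) :
  {within B, continuous f} -> continuous h -> (forall r, A r -> B (h r)) ->
  {within A, continuous (f \o h)}.
Proof.
move=> /subspace_continuousP cf ch hAB; apply/subspace_continuousP => r Ar.
apply: (cvg_comp _ _ _ (cf _ (hAB r Ar))) => W /= BW.
exact: filterS (fun z Wz Az => Wz (hAB z Az)) (ch r _ BW).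
Qed.

Section PrependSegment.
Variables (R : realType) (W : normedModType R).

Lemma affine_continuous (a b : R) : continuous (fun r : R => a * r + b).
Proof.
by move=> x; apply: cvgD; [apply: cvgM|]; [exact: cvg_cst|exact: cvg_id|exact: cvg_cst].
Qed.

(* On [0, 1/2] this runs along the segment from y to x, on [1/2, 1] it runs
   along pi at double speed; when pi 0 = x the two pieces agree at 1/2. *)
Definition prepend_segment (pi : R -> W) (x y : W) (r : R) : W :=
  pi (Num.max 0 (2 * r - 1)) + (1 - Num.min 1 (2 * r)) *: (y - x).

Lemma prepend_segment_continuous (pi : R -> W) x y :
  {within `[0, 1], continuous pi} ->
  {within `[0, 1], continuous (prepend_segment pi x y)}.
Proof.
move=> cpi; have ch : continuous (fun r : R => Num.max 0 (2 * r - 1)).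
  by move=> r; have := continuous_max (@cst_continuous R R 0 r)
                                     (@affine_continuous 2 (-1) r).
have ck : continuous (fun r : R => 1 - Num.min 1 (2 * r)).
  move=> r; apply: cvgB; first exact: cvg_cst.
  have := continuous_min (@cst_continuous R R 1 r) (@affine_continuous 2 0 r).
  by under [fun _ => _ + 0]eq_fun do rewrite addr0.
have h01 (r : R) : `[0, 1]%classic r -> `[0, 1]%classic (Num.max 0 (2 * r - 1)).
  rewrite /= !in_itv /= => /andP[r0 r1]; rewrite le_max lexx ge_max ler01 /=; lra.
move/subspace_continuousP: (within_comp_continuous cpi ch h01) => cpih.
apply/subspace_continuousP => r r01; apply: cvgD; first exact: cpih.
by apply: cvg_within_filter; apply: cvgZr_tmp; apply: ck.
Qed.

Lemma prepend_segment_lo (pi : R -> W) x y r : pi 0 = x -> 2 * r <= 1 ->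
  prepend_segment pi x y r = (1 - 2 * r) *: y + (2 * r) *: x.
Proof.
move=> pi0 r_le; rewrite /prepend_segment min_r // max_l; last by lra.
rewrite pi0 scalerBr [(1 - _) *: x]scalerBl scale1r opprB addrCA.
by rewrite [x + _]addrC subrK.
Qed.

Lemma prepend_segment_hi (pi : R -> W) x y r : 1 <= 2 * r ->
  prepend_segment pi x y r = pi (2 * r - 1).
Proof.
move=> r_ge; rewrite /prepend_segment min_l // max_r; last by lra.
by rewrite subrr scale0r addr0.
Qed.

End PrependSegment.

Lemma convex_coef_le1 (R : numDomainType) (T : eqType) (s : seq T) (lam : T -> R) v :
  (forall w, w \in s -> 0 <= lam w) -> \sum_(w <- s) lam w = 1 -> v \in s ->
  lam v <= 1.
Proof.
move=> lam_ge0 lam_sum1 vs; rewrite -lam_sum1 (big_rem v vs) /= lerDl.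
by rewrite big_seq; apply: sumr_ge0 => w /mem_rem; apply: lam_ge0.
Qed.

Lemma big_if_mem_subset (U : nmodType) (T : eqType) (s t : seq T) (F : T -> U) :
  uniq s -> uniq t -> {subset t <= s} ->
  \sum_(v <- s) (if v \in t then F v else 0) = \sum_(v <- t) F v.
Proof.
move=> us ut ts; rewrite -big_mkcond -big_filter; apply/perm_big/uniq_perm => //.
  exact: filter_uniq.
by move=> v; rewrite mem_filter; case vt: (v \in t) => //=; exact: ts.
Qed.

Section Cells.
Variables (R : realType) (m : nat).
Notation point := 'rV[R]_m.

Lemma cell_sub_hull (s : seq point) : cell s `<=` hull s.
Proof.
by move=> x [lam [lam_01 lam_sum]]; exists lam; split=> // v /lam_01 /andP[/ltW].
Qed.

Lemma eq_mem_cell (s t : seq point) : uniq s -> uniq t -> s =i t ->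
  cell s `<=` cell t.
Proof.
move=> us ut st x [lam [lam_01 [lam_sum ->]]]; have st_perm := uniq_perm us ut st.
exists lam; split; first by move=> v; rewrite -st; apply: lam_01.
by rewrite -!(perm_big _ st_perm).
Qed.

Lemma cell_segment (s : seq point) x y a : cell s x -> cell s y ->
  0 <= a <= 1 -> cell s ((1 - a) *: y + a *: x).
Proof.
move=> [lx [lx_01 [lx_sum ->]]] [ly [ly_01 [ly_sum ->]]] /andP[a_ge0 a_le1].
pose mu v := (1 - a) * ly v + a * lx v.
have mu_sum : \sum_(v <- s) mu v = 1.
  by rewrite big_split /= -!mulr_sumr lx_sum ly_sum !mulr1 subrK.
have mu_gt0 v : v \in s -> 0 < mu v.
  move=> vs; have /andP[lxv _] := lx_01 v vs; have /andP[lyv _] := ly_01 v vs.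
  rewrite /mu; have [a_lt1|a_ge1] := ltP a 1.
    have : 0 < (1 - a) * ly v by rewrite mulr_gt0 ?subr_gt0.
    have : 0 <= a * lx v by rewrite mulr_ge0 // ltW.
    lra.
  have -> : a = 1 by apply/eqP; rewrite eq_le a_le1.
  by rewrite subrr mul0r add0r mul1r.
exists mu; split; last split=> //.
  move=> v vs; rewrite mu_gt0 //=; apply: (convex_coef_le1 _ mu_sum) => // w ws.
  exact/ltW/mu_gt0.
rewrite !scaler_sumr -big_split /=; apply: eq_bigr => v _.
by rewrite !scalerA scalerDl.
Qed.

Lemma topo_path_polyhedron (K : seq (seq point)) pi x r :
  topo_path K pi x -> 0 <= r <= 1 -> polyhedron K (pi r).
Proof. by case=> _ [pi_in _]; apply: pi_in. Qed.

Variable K : seq (seq point).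
Hypothesis K_complex : simplicial_complex K.

Lemma cell_of_polyhedron x : polyhedron K x -> exists2 t, t \in K & cell t x.
Proof.
case: K_complex => K_simplex [K_faces _] [s sK [lam [lam_ge0 [lam_sum x_def]]]].
have [_ [us _]] := K_simplex s sK.
pose t := [seq v <- s | 0 < lam v].
have sum_t (U : nmodType) (F : point -> U) :
    (forall v, v \in s -> lam v = 0 -> F v = 0) ->
    \sum_(v <- s) F v = \sum_(v <- t) F v.
  move=> F0; rewrite big_filter [LHS](bigID (fun v => 0 < lam v)) /=.
  rewrite [X in _ + X]big_seq_cond [X in _ + X]big1 ?addr0 // => v /andP[vs].
  by rewrite lt_neqAle lam_ge0 // andbT negbK => /eqP/esym; apply: F0.
have t_sum : \sum_(v <- t) lam v = 1 by rewrite -sum_t.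
have t_face : is_face t s.
  split; last by split; [exact: filter_uniq|move=> v; rewrite mem_filter => /andP[]].
  by apply/eqP => t0; move: t_sum; rewrite t0 big_nil => /esym/eqP; rewrite oner_eq0.
have [t' t'K t't] := K_faces s t sK t_face.
exists t' => //; have [_ [ut' _]] := K_simplex t' t'K.
apply: (@eq_mem_cell t) => [||v|]; [exact: filter_uniq|done|by rewrite t't|].
exists lam; split; last by split=> //; rewrite x_def sum_t // => v _ ->; rewrite scale0r.
move=> v; rewrite mem_filter => /andP[lam_gt0 vs]; rewrite lam_gt0.
apply: (convex_coef_le1 _ t_sum); last by rewrite mem_filter lam_gt0.
by move=> w; rewrite mem_filter => /andP[/ltW].
Qed.

(* Barycentric coordinates in the simplex s are unique, and those of x with
   respect to the common face t vanish off t, while the cell coordinates do not. *)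
Lemma cell_meet_subset (s s' : seq point) x : s \in K -> s' \in K ->
  cell s x -> cell s' x -> {subset s <= s'}.
Proof.
case: K_complex => K_simplex [_ K_meet] sK s'K cx cx'.
have [_ [us s_indep]] := K_simplex s sK.
have [hull_disj|[t [[_ [ut ts]] [_ [_ ts']] hull_meet]]] := K_meet s s' sK s'K.
  have : (hull s `&` hull s') x by split; apply: cell_sub_hull.
  by rewrite hull_disj.
have : hull t x by rewrite -hull_meet; split; apply: cell_sub_hull.
case=> mu [_ [mu_sum x_mu]]; case: cx => lam [lam_01 [lam_sum x_lam]].
pose nu v := lam v - (if v \in t then mu v else 0).
have nu_comb : \sum_(v <- s) nu v *: v = 0.
  under eq_bigr do rewrite scalerBl (fun_if (fun c => c *: _)) scale0r.
  by rewrite sumrB big_if_mem_subset // -x_lam -x_mu subrr.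
have nu_sum : \sum_(v <- s) nu v = 0.
  by rewrite sumrB big_if_mem_subset // lam_sum mu_sum subrr.
move=> v vs; have := s_indep nu nu_comb nu_sum v vs; rewrite /nu.
case: ifP => [vt _|_]; first exact: ts'.
by rewrite subr0 => lam0; have := lam_01 v vs; rewrite lam0 ltxx.
Qed.

Lemma cell_meet_eq (s s' : seq point) x : s \in K -> s' \in K ->
  cell s x -> cell s' x -> cell s `<=` cell s'.
Proof.
move=> sK s'K cx cx'; case: K_complex => K_simplex _.
have [_ [us _]] := K_simplex s sK; have [_ [us' _]] := K_simplex s' s'K.
apply: eq_mem_cell => // v; apply/idP/idP.
  exact: (cell_meet_subset sK s'K cx cx').
exact: (cell_meet_subset s'K sK cx' cx).
Qed.

Lemma prepend_segment_path (pi : R -> point) x y s : topo_path K pi x ->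
    s \in K -> cell s x -> cell s y ->
  let rho := prepend_segment pi x y in
  [/\ topo_path K rho y, rho 1 = pi 1 &
      forall r, 0 <= r < 1 ->
        cell s (rho r) \/ exists2 r', 0 <= r' < 1 & rho r = pi r'].
Proof.
move=> pi_path sK cx cy rho; case: (pi_path) => pi_cont [_ pi0].
have rho_cell r : 0 <= r -> 2 * r <= 1 -> cell s (rho r).
  move=> r_ge0 r_le; rewrite /rho prepend_segment_lo //.
  by apply: cell_segment => //; apply/andP; lra.
have rho_pi r : 1 <= 2 * r -> rho r = pi (2 * r - 1) by apply: prepend_segment_hi.
split.
- split; first exact: prepend_segment_continuous.
  split; last by rewrite /rho prepend_segment_lo ?mulr0 ?subr0 ?scale1r ?scale0r ?addr0 //; lra.
  move=> r /andP[r_ge0 r_le1]; have [r_le|r_gt] := leP (2 * r) 1.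
    by exists s => //; apply/cell_sub_hull/rho_cell.
  by rewrite rho_pi; [apply: (topo_path_polyhedron pi_path); apply/andP|]; lra.
- by rewrite rho_pi; [congr pi|]; lra.
- move=> r /andP[r_ge0 r_lt1]; have [r_le|r_gt] := leP (2 * r) 1; first by left; apply: rho_cell.
  right; exists (2 * r - 1); first by apply/andP; lra.
  by rewrite rho_pi //; lra.
Qed.

End Cells.

Section Semantics.
Variables (R : realType) (m : nat) (PL : Type).
Variables (K : seq (seq 'rV[R]_m)) (V : PL -> set 'rV[R]_m).
Hypotheses (K_complex : simplicial_complex K) (V_cells : valuation_ok K V).
Local Notation sat := (sat K V).

Lemma sat_cell (phi : formula PL) s x y : s \in K -> cell s x -> cell s y ->
  sat phi x -> sat phi y.
Proof.
elim: phi s x y => [p|f IH|f IHf g IHg|f IHf g IHg] s x y sK cx cy /=.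
- have [S [SK ->]] := V_cells p; case=> s' s'S cs'x.
  by exists s' => //; apply: (cell_meet_eq K_complex sK (SK _ s'S) cx cs'x).
- by move=> nfx fy; apply/nfx/(IH s y x).
- by case=> fx gx; split; [apply: (IHf s x y) | apply: (IHg s x y)].
- case=> pi [pi_path [g_end f_before]].
  have [rho_path rho_end rho_before] := prepend_segment_path pi_path sK cx cy.
  have pi0 : pi 0 = x by case: pi_path => _ [].
  exists (prepend_segment pi x y); split=> //; split; first by rewrite rho_end.
  move=> r r01; have [c|[r' r'01 ->]] := rho_before r r01; last exact: f_before.
  by apply: (IHf s x) => //; rewrite -pi0; apply: f_before; rewrite lexx ltr01.
Qed.

(* A letter is needed only to write down [ftrue]; without letters there are no
   formulas at all, see [formula_void]. *)
Variable p0 : PL.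

Definition ftrue : formula PL := FNeg (FAnd (FAtom p0) (FNeg (FAtom p0))).

Definition fbigand (T : Type) (F : T -> formula PL) (l : seq T) : formula PL :=
  foldr (fun t => FAnd (F t)) ftrue l.

Definition fbigor (T : Type) (F : T -> formula PL) (l : seq T) : formula PL :=
  FNeg (fbigand (fun t => FNeg (F t)) l).

Lemma sat_ftrue x : sat ftrue x.
Proof. by case. Qed.

Lemma sat_fbigand (T : eqType) (F : T -> formula PL) (l : seq T) x :
  sat (fbigand F l) x <-> forall t, t \in l -> sat (F t) x.
Proof.
elim: l => [|t l IH] /=; first by split=> // _; apply: sat_ftrue.
split=> [[Ft /IH Fl] u|Fl]; first by rewrite in_cons => /predU1P[->|/Fl].
by split; [apply: Fl; rewrite mem_head | apply/IH => u ul; apply/Fl/mem_behead].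
Qed.

Lemma sat_fbigor (T : eqType) (F : T -> formula PL) (l : seq T) x :
  sat (fbigor F l) x <-> exists2 t, t \in l & sat (F t) x.
Proof.
rewrite /fbigor /=; split=> [nall|[t tl Ft /sat_fbigand all_neg]].
  by apply: contrapT => none; apply/nall/sat_fbigand => t tl Ft; apply: none; exists t.
exact: all_neg tl Ft.
Qed.

Definition separable (s t : seq 'rV[R]_m) : Prop := exists phi : formula PL,
  (forall x, cell s x -> sat phi x) /\ (forall y, cell t y -> ~ sat phi y).

Definition separating_formula (s t : seq 'rV[R]_m) : formula PL :=
  if pselect (separable s t) is left st then projT1 (cid st) else ftrue.

Lemma sat_separating_formula s t x : cell s x -> sat (separating_formula s t) x.
Proof.
rewrite /separating_formula; case: pselect => [st|_] cx; last exact: sat_ftrue.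
by case: (cid st) => phi [+ _] /=; apply.
Qed.

Lemma separating_formulaP s t y : separable s t -> cell t y ->
  ~ sat (separating_formula s t) y.
Proof.
rewrite /separating_formula; case: pselect => [st|//] _ cy.
by case: (cid st) => phi [_ +] /=; apply.
Qed.

Definition char_formula (s : seq 'rV[R]_m) : formula PL :=
  fbigand (separating_formula s) K.

Lemma sat_char_formula s x : cell s x -> sat (char_formula s) x.
Proof.
by move=> cx; apply/sat_fbigand => t _; apply: sat_separating_formula.
Qed.

Lemma char_formula_eta_equiv s x y : s \in K -> cell s x -> polyhedron K y ->
  sat (char_formula s) y -> eta_equiv K V x y.
Proof.
move=> sK cx y_in chi_y; split; first by exists s => //; apply: cell_sub_hull.
split=> // phi; have [t tK cy] := cell_of_polyhedron K_complex y_in.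
have nsep : ~ separable s t.
  move=> st; apply: (separating_formulaP st cy).
  by move/sat_fbigand: chi_y; apply.
split=> [phi_x|phi_y]; apply: contrapT => nphi; apply: nsep.
  exists phi; split=> [x' cx'|y' cy' phi_y']; first exact: (sat_cell sK cx).
  exact/nphi/(sat_cell tK cy').
exists (FNeg phi); split=> [x' cx' phi_x'|y' cy']; first exact/nphi/(sat_cell sK cx').
by apply; apply: (sat_cell tK cy).
Qed.

Lemma eta_equiv_path_transfer x1 x2 pi1 : eta_equiv K V x1 x2 ->
  topo_path K pi1 x1 ->
  exists pi2, topo_path K pi2 x2 /\ eta_equiv K V (pi1 1) (pi2 1) /\
    forall r2, 0 <= r2 < 1 ->
      exists r1, 0 <= r1 < 1 /\ eta_equiv K V (pi1 r1) (pi2 r2).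
Proof.
move=> [_ [_ x1_x2]] pi1_path.
have in01 (r : R) : 0 <= r < 1 -> 0 <= r <= 1 by move=> /andP[? ?]; apply/andP; lra.
have one_in01 : 0 <= (1 : R) <= 1 by rewrite ler01 lexx.
have in_K1 := topo_path_polyhedron pi1_path.
have [s1 s1K c1] := cell_of_polyhedron K_complex (in_K1 1 one_in01).
pose S := [seq s <- K | `[< exists2 r, 0 <= r < 1 & cell s (pi1 r) >]].
have /x1_x2 [pi2 [pi2_path [chi1_end chiS_before]]] :
    sat (FEta (fbigor char_formula S) (char_formula s1)) x1.
  exists pi1; split=> //; split=> [|r r01]; first exact: sat_char_formula.
  have [t tK ct] := cell_of_polyhedron K_complex (in_K1 r (in01 r r01)).
  apply/sat_fbigor; exists t; last exact: sat_char_formula.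
  by rewrite mem_filter tK andbT; apply/asboolP; exists r.
have in_K2 := topo_path_polyhedron pi2_path.
exists pi2; split=> //; split.
  exact: char_formula_eta_equiv s1K c1 (in_K2 1 one_in01) chi1_end.
move=> r2 r2_01; have /sat_fbigor [s] := chiS_before r2 r2_01.
rewrite mem_filter => /andP[/asboolP [r1 r1_01 cs] sK] chi_r2.
exists r1; split=> //.
exact: char_formula_eta_equiv sK cs (in_K2 r2 (in01 r2 r2_01)) chi_r2.
Qed.

End Semantics.

Lemma formula_void (PL : Type) : ~ inhabited PL -> formula PL -> False.
Proof. by move=> noPL; elim=> // p; apply: noPL. Qed.

Lemma eta_equiv_path_transfer_void (R : realType) (m : nat) (PL : Type)
    (K : seq (seq 'rV[R]_m)) (V : PL -> set 'rV[R]_m) x1 x2 pi1 :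
  ~ inhabited PL -> eta_equiv K V x1 x2 -> topo_path K pi1 x1 ->
  exists pi2, topo_path K pi2 x2 /\ eta_equiv K V (pi1 1) (pi2 1) /\
    forall r2, 0 <= r2 < 1 ->
      exists r1, 0 <= r1 < 1 /\ eta_equiv K V (pi1 r1) (pi2 r2).
Proof.
move=> noPL [_ [x2_in _]] pi1_path; have in_K1 := topo_path_polyhedron pi1_path.
have equiv_void y : polyhedron K y -> eta_equiv K V y x2.
  by move=> y_in; split=> //; split=> // phi; case: (formula_void noPL phi).
exists (fun=> x2); split.
  by split=> //; apply: continuous_subspaceT => r; apply: cst_continuous.
split=> [|r2 _]; first by apply/equiv_void/in_K1; rewrite ler01 lexx.
by exists 0; rewrite lexx ltr01; split=> //; apply/equiv_void/in_K1; rewrite lexx ler01.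
Qed.

Theorem lemma11 (R : realType) (m : nat) (PL : Type)
  (K : seq (seq 'rV[R]_m)) (V : PL -> set 'rV[R]_m) :
  simplicial_complex K -> valuation_ok K V ->
  weak_simplicial_bisimulation K V (eta_equiv K V).
Proof.
move=> K_complex V_cells; split=> [x1 x2 [? []]//|]; split.
  move=> x1 x2 [x1_in [x2_in x1_x2]]; split=> //; split=> // phi.
  exact: iff_sym.
move=> x1 x2 x1_x2; split=> [p|pi1]; first exact: x1_x2.2.2 (FAtom p).
have [[p0]|noPL] := pselect (inhabited PL).
  exact: eta_equiv_path_transfer.
exact: eta_equiv_path_transfer_void.
Qed.
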